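(* For every integer $L\geq 0$, \[ \sum_{j=-\infty}^{\infty} (-1)^j \left(\frac{j}{3}\right) {2L+1 \brack L-j}_{q^2} q^{j^2} = q^{1+2L}\,\frac{(q^3;q^6)_L}{(q;q^2)_L}. \]
   Context: For a variable $a$ and integer $n\ge 0$, $(a;q)_n=(1-a)(1-aq)\cdots(1-aq^{n-1})$ (with $(a;q)_0=1$). The $q$-binomial coefficient is ${A \brack B}_q=\frac{(q;q)_A}{(q;q)_B(q;q)_{A-B}}$ if $0\le B\le A$ are integers, and $0$ otherwise; ${A\brack B}_{q^2}$ is the same with $q$ replaced by $q^2$. $\left(\frac{j}{3}\right)$ is the Legendre symbol modulo 3: it equals $1$ if $j\equiv 1 \pmod 3$, $-1$ if $j\equiv -1\pmod 3$, and $0$ if $3\mid j$. *)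

From HB Require Import structures.
From mathcomp Require Import all_boot all_order all_algebra.
Set Implicit Arguments. Unset Strict Implicit. Unset Printing Implicit Defensive.
Import Order.TTheory GRing.Theory Num.Theory.
Local Open Scope ring_scope.

Definition qpoch (R : comPzRingType) (a q : R) (n : nat) : R :=
  \prod_(i < n) (1 - a * q ^+ i).

Definition qbinom (F : fieldType) (q : F) (A B : int) : F :=
  if (0 <= B) && (B <= A) then
    qpoch q q `|A|%N / (qpoch q q `|B|%N * qpoch q q `|A - B|%N)
  else 0.

Definition leg3 (j : int) : int :=
  if (j %% 3)%Z == 1 then 1 else if (j %% 3)%Z == 2 then -1 else 0.

Definition QF := {fraction {poly int}}.
Definition qX : QF := tofrac ('X : {poly int}).

From HB Require Import structures.
From mathcomp Require Import all_boot all_order all_algebra.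
From mathcomp Require Import zify ring.
Import Order.TTheory GRing.Theory Num.Theory.
Local Open Scope ring_scope.
Set Implicit Arguments. Unset Strict Implicit. Unset Printing Implicit Defensive.

(* By Cauchy's q-binomial theorem, P(X) = prod_(t <= 2L) (X + q^(2t+1-2L)) has
   coefficient [2L+1, L-j]_(q^2) q^(j^2-L^2) at X^(L+1+j), and (-1)^j (j/3) is, up
   to sign, the coordinate on zeta of zeta^j in the basis (1, zeta), for zeta a
   primitive sixth root of unity. So the sum is -q^(L^2) times the zeta-coordinate
   of zeta^(5L+5) P(zeta). The roots of P are q^(2L+1) and the pairs q^-(2s+1),
   q^(2s+1) for s < L, and zeta^2 - zeta + 1 = 0 turns each pair into
   (zeta + a^-1)(zeta + a) = (1 + a + a^-1) zeta. Finally
   a (1 + a + a^-1) (1 - a) = 1 - a^3 produces (q^3; q^6)_L / (q; q^2)_L. *)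

Lemma big_ord_window (R : nmodType) (f : nat -> R) a m N : (a + m <= N)%N ->
  (forall k, (k < a)%N -> f k = 0) -> (forall k, (a + m <= k < N)%N -> f k = 0) ->
  \sum_(k < N) f k = \sum_(i < m) f (a + i)%N.
Proof.
move=> le_N f_lt f_gt; rewrite -!(big_mkord xpredT).
rewrite (@big_cat_nat _ _ _ a 0 N) ?(leq_trans (leq_addr m a)) //=.
rewrite (@big_cat_nat _ _ _ (a + m) a N) ?leq_addr //=.
rewrite [\sum_(0 <= k < a) _]big1_seq => [|k /andP[_]]; last first.
  by rewrite mem_index_iota => /andP[_ /f_lt].
rewrite [\sum_(a + m <= k < N) _]big1_seq => [|k /andP[_]]; last first.
  by rewrite mem_index_iota => /f_gt.
rewrite add0r addr0 -{1}(add0n a) big_addn addKn big_mkord.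
by apply: eq_bigr => i _; rewrite addnC.
Qed.

Fixpoint gauss_binom (R : pzSemiRingType) (Q : R) (n m : nat) : R :=
  match n, m with
  | _, 0%N => 1
  | 0%N, _.+1 => 0
  | n'.+1, m'.+1 => gauss_binom Q n' m' + Q ^+ m * gauss_binom Q n' m
  end.

Lemma gauss_binom_gt (R : pzSemiRingType) (Q : R) n m :
  (n < m)%N -> gauss_binom Q n m = 0.
Proof.
by elim: n m => [|n IHn] [|m] //= lt_nm; rewrite !IHn ?mulr0 ?addr0 // ltnW.
Qed.

Lemma qpoch0 (R : comPzRingType) (a Q : R) : qpoch a Q 0 = 1.
Proof. by rewrite /qpoch big_ord0. Qed.

Lemma qpochS (R : comPzRingType) (Q : R) n :
  qpoch Q Q n.+1 = qpoch Q Q n * (1 - Q ^+ n.+1).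
Proof. by rewrite /qpoch big_ord_recr /= exprS. Qed.

Lemma gauss_binom_qpoch (R : comPzRingType) (Q : R) n m : (m <= n)%N ->
  gauss_binom Q n m * (qpoch Q Q m * qpoch Q Q (n - m)) = qpoch Q Q n.
Proof.
elim: n m => [|n IHn] [|m] //=; rewrite ?qpoch0 ?subn0 ?mul1r // ltnS subSS => le_mn.
have first_term : gauss_binom Q n m * (qpoch Q Q m.+1 * qpoch Q Q (n - m))
    = qpoch Q Q n * (1 - Q ^+ m.+1).
  by rewrite qpochS -(IHn m le_mn); ring.
have second_term : Q ^+ m.+1 * gauss_binom Q n m.+1 * (qpoch Q Q m.+1 * qpoch Q Q (n - m))
    = qpoch Q Q n * (Q ^+ m.+1 - Q ^+ n.+1).
  case: ltngtP le_mn => // [lt_mn _ | <- _]; last first.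
    by rewrite gauss_binom_gt // subrr !mulr0 mul0r.
  have expQ : Q ^+ m.+1 * Q ^+ (n - m) = Q ^+ n.+1 by rewrite -exprD; congr (_ ^+ _); lia.
  rewrite -(subnSK lt_mn) (qpochS _ (n - m.+1)) -(IHn m.+1 lt_mn) -expQ (subnSK lt_mn); ring.
by rewrite mulrDl first_term second_term qpochS; ring.
Qed.

Lemma qpoch_neq0 (F : fieldType) (Q : F) n :
  (forall k, (0 < k)%N -> Q ^+ k != 1) -> qpoch Q Q n != 0.
Proof.
move=> Q_not_unity; apply/prodf_neq0 => i _.
by rewrite -exprS subr_eq0 eq_sym Q_not_unity.
Qed.

Lemma qbinom_gauss (F : fieldType) (Q : F) (n m : nat) :
  (forall k, (0 < k)%N -> Q ^+ k != 1) -> (m <= n)%N ->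
  qbinom Q n%:Z m%:Z = gauss_binom Q n m.
Proof.
move=> Q_not_unity le_mn; rewrite /qbinom lez_nat le_mn subzn //=.
by rewrite -(gauss_binom_qpoch Q le_mn) mulfK // mulf_neq0 ?qpoch_neq0.
Qed.

Lemma size_prod_XaddC (R : nzRingType) n (c : 'I_n -> R) :
  size (\prod_(t < n) ('X + (c t)%:P)) = n.+1.
Proof.
under eq_bigr do rewrite -[c _]opprK polyCN.
by rewrite size_prod_XsubC /index_enum -enumT size_enum_ord.
Qed.

Lemma monic_prod_XaddC (R : nzRingType) n (c : 'I_n -> R) :
  \prod_(t < n) ('X + (c t)%:P) \is monic.
Proof. by apply: monic_prod => t _; exact: monicXaddC. Qed.

Lemma prod_geomMl (R : comPzRingType) (a Q : R) m :
  \prod_(t < m) (a * Q * Q ^+ t) = Q ^+ m * \prod_(t < m) (a * Q ^+ t).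
Proof.
under eq_bigr do rewrite mulrAC.
by rewrite big_split prodr_const card_ord mulrC.
Qed.

Lemma coef_prod_XaddC_geom (R : comNzRingType) (a Q : R) n m : (m <= n)%N ->
  (\prod_(t < n) ('X + (a * Q ^+ t)%:P))`_(n - m)
    = gauss_binom Q n m * \prod_(t < m) (a * Q ^+ t).
Proof.
elim: n a m => [|n IHn] a [|m] //= le_mn.
- by rewrite !big_ord0 coef1 mul1r.
- have /monicP := monic_prod_XaddC (fun t : 'I_n.+1 => a * Q ^+ t).
  by rewrite lead_coefE size_prod_XaddC subn0 big_ord0 mul1r.
rewrite subSS big_ord_recl expr0 mulr1 /= /bump /=.
under eq_bigr do rewrite add1n exprS mulrA.
rewrite mulrDl coefD coefXM coefCM IHn // [RHS]mulrDl addrC; congr (_ + _).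
  by rewrite prod_geomMl big_ord_recr /=; ring.
move: le_mn; rewrite ltnS; case: ltngtP => // [lt_mn _ | <- _].
  by rewrite subn_eq0 leqNgt lt_mn /= -subnS IHn // prod_geomMl; ring.
by rewrite subnn gauss_binom_gt // mulr0 mul0r.
Qed.

(* Reduction modulo X^2 - X + 1 is evaluation at a primitive sixth root of unity
   zeta; zcoord P is the coordinate of P(zeta) on zeta in the basis (1, zeta), and
   zpow_coord r is that of zeta^r. *)
Definition cyclo6 (F : fieldType) : {poly F} := 'X^2 - 'X + 1.
Arguments cyclo6 {F}.

Definition zcoord (F : fieldType) (P : {poly F}) : F := (P %% cyclo6)`_1.

Definition zpow_coord (F : fieldType) (r : nat) : F :=
  match r with 1%N | 2%N => 1 | 4%N | 5%N => -1 | _ => 0 end.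

Section Cyclo6.
Variable F : fieldType.
Implicit Types (P Q : {poly F}) (a b : F).

Lemma zcoordD P Q : zcoord (P + Q) = zcoord P + zcoord Q.
Proof. by rewrite /zcoord modpD coefD. Qed.

Lemma zcoordZ a P : zcoord (a *: P) = a * zcoord P.
Proof. by rewrite /zcoord modpZl coefZ. Qed.

Lemma zcoord_sum (I : Type) (r : seq I) (p : pred I) (f : I -> {poly F}) :
  zcoord (\sum_(i <- r | p i) f i) = \sum_(i <- r | p i) zcoord (f i).
Proof. by apply: big_morph; [exact: zcoordD | rewrite /zcoord mod0p coef0]. Qed.

Lemma zcoord_congr P Q : cyclo6 %| P - Q -> zcoord P = zcoord Q.
Proof.
move=> dvd_PQ; rewrite -(subrK Q P) zcoordD.
by rewrite {1}/zcoord (modp_eq0 dvd_PQ) coef0 add0r.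
Qed.

Lemma size_cyclo6 : size (cyclo6 : {poly F}) = 3%N.
Proof.
rewrite /cyclo6 -addrA size_polyDl ?size_polyXn //.
by rewrite (leq_ltn_trans (size_polyD _ _)) // size_polyN size_polyX size_poly1.
Qed.

Lemma zcoord_remainder a b P D :
  P - (a%:P + b%:P * 'X) = D * cyclo6 -> zcoord P = b.
Proof.
move=> decomp; rewrite (@zcoord_congr P (a%:P + b%:P * 'X)); last first.
  by rewrite decomp dvdp_mull.
rewrite /zcoord modp_small; first by rewrite coefD coefC coefCM coefX mulr1 add0r.
rewrite size_cyclo6 (leq_ltn_trans (size_polyD _ _)) // gtn_max.
rewrite (leq_ltn_trans (size_polyC_leq1 _)) // (leq_ltn_trans (size_polyMleq _ _)) //.
by rewrite size_polyX addn2 /= !ltnS size_polyC_leq1.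
Qed.

Lemma zcoord_Xn_small r : (r < 6)%N -> zcoord 'X^r = zpow_coord F r.
Proof.
case: r => [|[|[|[|[|[|r]]]]]] // _; rewrite /zpow_coord.
- by apply: (@zcoord_remainder 1 _ _ 0); rewrite polyC0 polyC1; ring.
- by apply: (@zcoord_remainder 0 _ _ 0); rewrite polyC0 polyC1; ring.
- by apply: (@zcoord_remainder (-1) _ _ 1); rewrite /cyclo6 polyCN polyC1; ring.
- by apply: (@zcoord_remainder (-1) _ _ ('X + 1)); rewrite /cyclo6 polyCN polyC0 polyC1; ring.
- by apply: (@zcoord_remainder 0 _ _ ('X^2 + 'X)); rewrite /cyclo6 polyCN polyC0 polyC1; ring.
- by apply: (@zcoord_remainder 1 _ _ ('X^3 + 'X^2 - 1)); rewrite /cyclo6 polyCN polyC1; ring.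
Qed.

Lemma zcoord_Xn e : zcoord 'X^e = zpow_coord F (e %% 6).
Proof.
rewrite -zcoord_Xn_small ?ltn_pmod //; apply: zcoord_congr.
have cyclo6_dvd_X6 : @cyclo6 F %| 'X^6 - 1.
  have -> : 'X^6 - 1 = ('X^4 + 'X^3 - 'X - 1) * cyclo6 :> {poly F} by rewrite /cyclo6; ring.
  exact: dvdp_mull.
have -> : 'X^e = ('X^6) ^+ (e %/ 6) * 'X^(e %% 6) :> {poly F}.
  by rewrite -exprM -exprD mulnC -divn_eq.
rewrite -{2}['X^(e %% 6)]mul1r -mulrBl dvdp_mulr // (dvdp_trans cyclo6_dvd_X6) //.
by rewrite -{2}(expr1n _ (e %/ 6)) subrXX dvdp_mulr.
Qed.

Lemma zcoord_mulXn P n N : (size P <= N)%N ->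
  zcoord ('X^n * P) = \sum_(i < N) P`_i * zpow_coord F ((i + n) %% 6).
Proof.
move=> le_size; have P_def : P = \poly_(i < N) P`_i.
  apply/polyP => i; rewrite coef_poly; case: ltnP => // le_Ni.
  by rewrite nth_default // (leq_trans le_size).
rewrite {1}P_def poly_def mulr_sumr zcoord_sum; apply: eq_bigr => i _.
by rewrite -scalerAr zcoordZ -exprD zcoord_Xn addnC.
Qed.

Lemma dvdp_prod_sub (I : Type) (r : seq I) (p : pred I) (f g : I -> {poly F}) D :
  (forall i, p i -> D %| f i - g i) ->
  D %| \prod_(i <- r | p i) f i - \prod_(i <- r | p i) g i.
Proof.
move=> dvd_fg; elim/big_ind2: _ => [|g1 f1 g2 f2 dvd1 dvd2|]; last exact: dvd_fg.
  by rewrite subrr dvdp0.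
have -> : f1 * f2 - g1 * g2 = f1 * (f2 - g2) + (f1 - g1) * g2 by ring.
by apply: dvdp_add; [exact: dvdp_mull | exact: dvdp_mulr].
Qed.

Lemma cyclo6_dvd_pair a : a != 0 ->
  cyclo6 %| ('X + a^-1%:P) * ('X + a%:P) - (1 + a + a^-1)%:P * 'X.
Proof.
move=> a_neq0; have inv_a : a^-1%:P * a%:P = 1 :> {poly F} by rewrite -polyCM mulVf.
have -> : ('X + a^-1%:P) * ('X + a%:P) - (1 + a + a^-1)%:P * 'X = cyclo6.
  by rewrite /cyclo6 !polyCD polyC1; ring: inv_a.
exact: dvdpp.
Qed.
End Cyclo6.

Lemma sign_leg3_zpow_coord (F : fieldType) (j : int) (e : nat) :
  (j = e%:Z %[mod 6])%Z ->
  (-1) ^+ `|j|%N * (leg3 j)%:~R = - zpow_coord F (e %% 6) :> F.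
Proof.
move=> j_mod6; rewrite -signr_odd /leg3.
have -> : odd `|j| = odd (e %% 6) by lia.
have -> : (j %% 3)%Z = ((e %% 6) %% 3)%N%:Z by lia.
have : (e %% 6 < 6)%N by rewrite ltn_pmod.
by case: (e %% 6)%N => [|[|[|[|[|[|r]]]]]] //= _; rewrite ?mulr1 ?mulr0 ?mulrN1 ?opprK ?oppr0.
Qed.

Section Identity.
Variables (F : fieldType) (q : F).
Hypotheses (q_neq0 : q != 0) (q_not_unity : forall k, (0 < k)%N -> q ^+ k != 1).

Definition odd_roots_poly (L : nat) : {poly F} :=
  \prod_(t < 2 * L + 1) ('X + (q ^ (1 - 2 * L%:Z) * (q ^+ 2) ^+ t)%:P).

Definition leg3_term (L k : nat) : F :=
  let j : int := (k%:Z - (2 * L + 2)%:Z)%R in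
  (-1) ^+ `|j|%N * (leg3 j)%:~R
    * qbinom (q ^+ 2) (2 * L + 1)%:Z (L%:Z - j) * q ^+ (`|j| ^ 2)%N.

Lemma expz_geom (z : int) n : q ^ z * (q ^+ 2) ^+ n = q ^ (z + (2 * n)%N%:Z).
Proof. by rewrite -exprM exprnP expfzDr. Qed.

Lemma odd_roots_poly_pairs L :
  odd_roots_poly L = \prod_(s < L) (('X + (q ^+ (2 * s + 1))^-1%:P) * ('X + (q ^+ (2 * s + 1))%:P))
                     * ('X + (q ^+ (2 * L + 1))%:P).
Proof.
rewrite /odd_roots_poly addn1 big_ord_recr /= expz_geom; congr (_ * ('X + _%:P)); last first.
  by rewrite exprnP; congr (_ ^ _); lia.
elim: L => [|L IHL]; first by rewrite !big_ord0.
rewrite (_ : 2 * L.+1 = (2 * L).+2)%N ?mulnS // big_ord_recl big_ord_recr /= big_ord_recr /= -IHL.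
have first_root : q ^ (1 - 2 * L.+1%:Z) * (q ^+ 2) ^+ 0 = (q ^+ (2 * L + 1))^-1.
  by rewrite expr0 mulr1 (exprnP q (2 * L + 1)) invr_expz; congr (_ ^ _); lia.
have last_root : q ^ (1 - 2 * L.+1%:Z) * (q ^+ 2) ^+ bump 0 (2 * L) = q ^+ (2 * L + 1).
  by rewrite expz_geom exprnP /bump /=; congr (_ ^ _); lia.
have middle_roots t :
    q ^ (1 - 2 * L.+1%:Z) * (q ^+ 2) ^+ bump 0 t = q ^ (1 - 2 * L%:Z) * (q ^+ 2) ^+ t.
  by rewrite /bump /= !expz_geom; congr (_ ^ _); lia.
under eq_bigr do rewrite middle_roots.
by rewrite first_root last_root; ring.
Qed.

Lemma zcoord_odd_roots_poly L :
  zcoord ('X^(5 * L + 5) * odd_roots_poly L)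
    = - (\prod_(s < L) (1 + q ^+ (2 * s + 1) + (q ^+ (2 * s + 1))^-1) * q ^+ (2 * L + 1)).
Proof.
rewrite odd_roots_poly_pairs.
set Pairs := \prod_(s < L) _; set D := \prod_(s < L) _; set c := q ^+ (2 * L + 1).
have pairs_mod : cyclo6 %| Pairs - D%:P * 'X^L.
  have -> : D%:P * 'X^L
      = \prod_(s < L) ((1 + q ^+ (2 * s + 1) + (q ^+ (2 * s + 1))^-1)%:P * 'X).
    by rewrite big_split /= rmorph_prod prodr_const card_ord.
  by apply: dvdp_prod_sub => s _; rewrite cyclo6_dvd_pair // expf_neq0.
have reduced : cyclo6 %| 'X^(5 * L + 5) * (Pairs * ('X + c%:P))
                         - D%:P * ('X^(6 * L + 6) + c%:P * 'X^(6 * L + 5)).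
  have X6L6 : 'X^(6 * L + 6) = 'X^(5 * L + 5) * 'X^L * 'X :> {poly F}.
    by rewrite -exprD -exprSr; congr (_ ^+ _); lia.
  have X6L5 : 'X^(6 * L + 5) = 'X^(5 * L + 5) * 'X^L :> {poly F}.
    by rewrite -exprD; congr (_ ^+ _); lia.
  have -> : 'X^(5 * L + 5) * (Pairs * ('X + c%:P))
              - D%:P * ('X^(6 * L + 6) + c%:P * 'X^(6 * L + 5))
          = 'X^(5 * L + 5) * ('X + c%:P) * (Pairs - D%:P * 'X^L).
    by rewrite X6L6 X6L5; ring.
  exact: dvdp_mull.
rewrite (zcoord_congr reduced) !mul_polyC zcoordZ zcoordD zcoordZ !zcoord_Xn.
have -> : ((6 * L + 6) %% 6 = 0)%N by lia.
have -> : ((6 * L + 5) %% 6 = 5)%N by lia.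
by rewrite /=; ring.
Qed.

Lemma expr_sq_prod_odd L : q ^+ (L ^ 2) = \prod_(s < L) q ^+ (2 * s + 1).
Proof.
elim: L => [|L IHL]; first by rewrite big_ord0.
by rewrite big_ord_recr /= -IHL -exprD; congr (_ ^+ _); lia.
Qed.

Lemma prod_odd_qpoch L :
  q ^+ (L ^ 2) * \prod_(s < L) (1 + q ^+ (2 * s + 1) + (q ^+ (2 * s + 1))^-1)
    * qpoch q (q ^+ 2) L = qpoch (q ^+ 3) (q ^+ 6) L.
Proof.
rewrite expr_sq_prod_odd /qpoch -!big_split /=; apply: eq_bigr => s _.
set a := q ^+ (2 * s + 1); have a_neq0 : a != 0 by rewrite expf_neq0.
have -> : q * (q ^+ 2) ^+ s = a by rewrite -exprM -exprS /a addn1.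
have -> : q ^+ 3 * (q ^+ 6) ^+ s = a ^+ 3 by rewrite /a -!exprM -exprD; congr (_ ^+ _); lia.
by field.
Qed.

Lemma expr_sq_prod_geom L (j : int) m : L%:Z - j = m%:Z ->
  q ^+ (`|j| ^ 2)%N = q ^+ (L ^ 2) * \prod_(t < m) (q ^ (1 - 2 * L%:Z) * (q ^+ 2) ^+ t).
Proof.
elim: m j => [|m IHm] j jE.
  by rewrite big_ord0 mulr1; congr (_ ^+ _); lia.
rewrite big_ord_recr /= (mulrA (q ^+ (L ^ 2))) -(IHm (j + 1)); last lia.
by rewrite expz_geom !exprnP -expfzDr //; congr (_ ^ _); lia.
Qed.

Lemma leg3_term_coef L i : (i < 2 * L + 2)%N ->
  leg3_term L (L + 1 + i)
  = - q ^+ (L ^ 2) * ((odd_roots_poly L)`_i * zpow_coord F ((i + (5 * L + 5)) %% 6)).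
Proof.
rewrite /leg3_term => lt_i; set j := (_ - _)%R; set m := (2 * L + 1 - i)%N.
have jE : L%:Z - j = m%:Z by rewrite /j /m; lia.
have q2_not_unity k : (0 < k)%N -> (q ^+ 2) ^+ k != 1.
  by move=> k_gt0; rewrite -exprM q_not_unity // muln_gt0.
have coef_i : (odd_roots_poly L)`_i
    = gauss_binom (q ^+ 2) (2 * L + 1) m * \prod_(t < m) (q ^ (1 - 2 * L%:Z) * (q ^+ 2) ^+ t).
  by rewrite /odd_roots_poly -coef_prod_XaddC_geom ?leq_subr // subKn // -ltnS -addnS.
rewrite jE qbinom_gauss ?leq_subr // (expr_sq_prod_geom jE) coef_i.
rewrite (@sign_leg3_zpow_coord _ _ (i + (5 * L + 5))); first by ring.
by rewrite /j; lia.
Qed.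

Lemma qpoch_odd_neq0 L : qpoch q (q ^+ 2) L != 0.
Proof.
apply/prodf_neq0 => s _; rewrite -exprM -exprS subr_eq0 eq_sym.
exact: q_not_unity.
Qed.

Theorem sum_leg3_term (L : nat) :
  \sum_(k < 4 * L + 5) leg3_term L k
  = q ^+ (1 + 2 * L) * qpoch (q ^+ 3) (q ^+ 6) L / qpoch q (q ^+ 2) L.
Proof.
rewrite (@big_ord_window _ _ (L + 1) (2 * L + 2)); first last.
- by move=> k /andP[lo hi]; rewrite /leg3_term /qbinom ifF ?mulr0 ?mul0r //; lia.
- by move=> k lt_k; rewrite /leg3_term /qbinom ifF ?mulr0 ?mul0r //; lia.
- lia.
rewrite (eq_bigr _ (fun i _ => leg3_term_coef (ltn_ord i))) -mulr_sumr.
rewrite -zcoord_mulXn; last by rewrite /odd_roots_poly size_prod_XaddC addn1 addn2.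
rewrite zcoord_odd_roots_poly -prod_odd_qpoch addnC.
by field; rewrite qpoch_odd_neq0.
Qed.
End Identity.

Lemma qX_neq0 : qX != 0.
Proof. by rewrite /qX tofrac_eq0 polyX_eq0. Qed.

Lemma qX_not_unity k : (0 < k)%N -> qX ^+ k != 1.
Proof.
move=> k_gt0; rewrite /qX -tofracXn -tofrac1 tofrac_eq.
apply/eqP => Xk_eq1; have := congr1 (fun p : {poly int} => size p) Xk_eq1.
by rewrite size_polyXn size_poly1 => -[k_eq0]; rewrite k_eq0 in k_gt0.
Qed.

Theorem theorem2p6 (L : nat) :
  \sum_(k < (4 * L + 5)%N)
     (let j : int := (k%:Z - (2 * L + 2)%:Z)%R in
      (-1) ^+ `|j|%N * (leg3 j)%:~R
        * qbinom (qX ^+ 2) (2 * L + 1)%:Z (L%:Z - j) * qX ^+ (`|j| ^ 2)%N)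
  = qX ^+ (1 + 2 * L) * qpoch (qX ^+ 3) (qX ^+ 6) L / qpoch qX (qX ^+ 2) L.
Proof. exact: sum_leg3_term qX_neq0 qX_not_unity L. Qed.
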